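(* Let $H_1$ and $H_2$ be finite-dimensional Hilbert spaces and let $G\in L(H_1,H_2)$ with $\|G\|=1$ be a relative spear operator. Then $G$ is a partial isometry.
   Context: For a norm-one $G\in L(X,Y)$ and $T\in L(X,Y)$ ($X,Y$ Banach spaces, $S_X$ the unit sphere): $\|T\|_G := \inf_{\delta>0}\sup\{\|Tx\|: x\in S_X,\ \|Gx\|>1-\delta\}$; $V_G(T):=\bigcap_{\delta>0}\overline{\{y^*(Tx): x\in S_X,\ y^*\in S_{Y^*},\ \operatorname{Re} y^*(Gx)>1-\delta\}}$ and $\nu_G(T):=\max\{|\lambda|:\lambda\in V_G(T)\}$. $G$ is called a relative spear operator if $\nu_G(T)=\|T\|_G$ for all $T\in L(X,Y)$. A partial isometry is an operator $G$ with $G^*G$ an orthogonal projection. *)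

From HB Require Import structures.
From mathcomp Require Import all_boot all_order all_algebra.
From mathcomp Require Import boolp classical_sets reals.
From mathcomp Require Import complex.

Set Implicit Arguments.
Unset Strict Implicit.
Unset Printing Implicit Defensive.

Import Order.TTheory GRing.Theory Num.Theory.
Local Open Scope ring_scope.
Local Open Scope classical_set_scope.

(* Finite-dimensional Hilbert spaces over the scalar field K (K = R or K = R[i])
   are modelled as K^n = 'cV[K]_n with the standard inner product
   <x,y> = \sum_i conj(x_i) y_i.  Operators K^n -> K^m are matrices 'M[K]_(m,n)
   acting by x |-> T *m x.
   [re : K -> R] is the real part map (id for K = R, complex.Re for K = R[i]),
   so that [re `|z|] is the (real) modulus of the scalar z.
   [conj : K -> K] is complex conjugation (id for K = R). *)

Section RelSpear.
Variables (R : realType) (K : numFieldType) (re : K -> R) (conj : K -> K).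

Definition kabs (z : K) : R := re `|z|.

Definition hnorm n (x : 'cV[K]_n) : R := Num.sqrt (\sum_i (kabs (x i 0)) ^+ 2).

Definition hsphere n : set 'cV[K]_n := [set x | hnorm x = 1].

Definition opnorm m n (T : 'M[K]_(m, n)) : R :=
  sup [set hnorm (T *m x) | x in @hsphere n].

(* the dual of K^m : linear functionals y |-> f *m y, f a row vector,
   with the dual (operator) norm *)
Definition dnorm m (f : 'rV[K]_m) : R :=
  sup [set kabs ((f *m y) 0 0) | y in @hsphere m].

Definition dsphere m : set 'rV[K]_m := [set f | dnorm f = 1].

Definition relnorm m n (G T : 'M[K]_(m, n)) : R :=
  inf [set s | exists2 d : R, 0 < d &
         s = sup [set hnorm (T *m x) |
                   x in [set x | @hsphere n x /\ 1 - d < hnorm (G *m x)]]].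

Definition numrange_approx m n (G T : 'M[K]_(m, n)) (d : R) : set K :=
  [set z | exists x, exists f, [/\ @hsphere n x, @dsphere m f,
              1 - d < re ((f *m (G *m x)) 0 0) & z = (f *m (T *m x)) 0 0]].

Definition kclosure (A : set K) : set K :=
  [set l | forall e : R, 0 < e -> exists2 a, A a & kabs (l - a) < e].

Definition numrange m n (G T : 'M[K]_(m, n)) : set K :=
  [set l | forall d : R, 0 < d -> kclosure (numrange_approx G T d) l].

(* nu_G(T) = max { |lambda| : lambda in V_G(T) } (written as a sup; V_G(T) is
   compact and nonempty here, so the sup is the max) *)
Definition numradius m n (G T : 'M[K]_(m, n)) : R :=
  sup [set kabs l | l in numrange G T].

Definition relative_spear m n (G : 'M[K]_(m, n)) : Prop :=
  forall T : 'M[K]_(m, n), numradius G T = relnorm G T.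

Definition adjoint m n (T : 'M[K]_(m, n)) : 'M[K]_(n, m) := (map_mx conj T)^T.

Definition orth_projection n (P : 'M[K]_n) : Prop :=
  P *m P = P /\ adjoint P = P.

Definition partial_isometry m n (G : 'M[K]_(m, n)) : Prop :=
  orth_projection (adjoint G *m G).

End RelSpear.

From HB Require Import structures.
From mathcomp Require Import all_boot all_order all_algebra.
From mathcomp Require Import boolp classical_sets reals.
From mathcomp Require Import ring lra.

(* Put P := 1 - G G^*; it suffices to show P G = 0, for then G G^* G = G and
   G^* G is an orthogonal projection.  For a vector v and a coordinate i let
   T := v e_i^*, so that T x = x_i v.  If v = P G z then
   G^* T = (1 - G^* G) C for some C, and such a T has numerical radius 0 with
   respect to G: whenever ||x|| = 1 and Re f(Gx) is close to 1, the vector x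
   is close to G^* G x and f is close to <Gx, .>, so f(Tx) is close to
   <Gx, Tx> = <(1 - G^* G) x, C x>, which is close to 0.  By the spear
   property ||T||_G = 0, i.e. |x_i| ||v|| is small for all almost norming x.
   Taking one almost norming unit vector x for all coordinates at once gives
   ||v||^2 = sum_i |x_i|^2 ||v||^2 <= n eps^2, hence v = 0. *)

Set Implicit Arguments.
Unset Strict Implicit.
Unset Printing Implicit Defensive.

Import Order.TTheory GRing.Theory Num.Theory.
(* Imported after Num.Theory so that [Re] denotes [complex.Re]. *)
From mathcomp Require Import complex.
Local Open Scope ring_scope.
Local Open Scope classical_set_scope.

Lemma cauchy_schwarz_sum (R : realFieldType) n (a b : 'I_n -> R) :
  (\sum_i a i * b i) ^+ 2 <= (\sum_i a i ^+ 2) * (\sum_i b i ^+ 2).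
Proof.
have lagrange : \sum_i \sum_j (a i * b j - a j * b i) ^+ 2 =
    ((\sum_i a i ^+ 2) * (\sum_i b i ^+ 2)) *+ 2 - ((\sum_i a i * b i) ^+ 2) *+ 2.
  rewrite (eq_bigr (fun i => \sum_j (a i ^+ 2 * b j ^+ 2 + a j ^+ 2 * b i ^+ 2
      - ((a i * b i) * (a j * b j)) *+ 2))); last first.
    by move=> i _; apply: eq_bigr => j _; rewrite sqrrB !exprMn; ring.
  under eq_bigr do rewrite sumrB big_split /= sumrMnl.
  rewrite sumrB big_split /= sumrMnl.
  rewrite (exchange_big _ _ _ _ _ (fun i j => a j ^+ 2 * b i ^+ 2)) /= -mulr2n.
  rewrite expr2 !mulr_suml; congr (_ *+ 2 - _ *+ 2).
    by apply: eq_bigr => i _; rewrite mulr_sumr.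
  by apply: eq_bigr => i _; rewrite mulr_sumr.
have : 0 <= \sum_i \sum_j (a i * b j - a j * b i) ^+ 2.
  by apply: sumr_ge0 => i _; apply: sumr_ge0 => j _; apply: sqr_ge0.
by rewrite lagrange subr_ge0 lerMn2r.
Qed.

Section Suprema.
Variable R : realType.

Lemma sup_neq0_has_sup (S : set R) : sup S != 0 -> has_sup S.
Proof. by apply: contraNP => /sup_out ->. Qed.

Lemma sup_eq0 (S : set R) : (forall y, S y -> y = 0) -> sup S = 0.
Proof.
move=> S0; have [[y Sy]|/set0P/negP/negPn/eqP ->] := pselect (S !=set0).
  suff -> : S = [set 0] by exact: sup1.
  by apply/seteqP; split=> [z /S0 ->|z ->] //=; rewrite -(S0 y).
exact: sup0.
Qed.

End Suprema.

(* The scalar field K is R or R[i]: [conj] is the conjugation, [re] the real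
   part and [emb] the embedding of R into K. *)
Section HilbertSpace.
Variables (R : realType) (K : numFieldType).
Variables (re : {additive K -> R}) (conj : {rmorphism K -> K}).
Variable emb : {rmorphism R -> K}.
Hypothesis conjK : involutive conj.
Hypothesis conj_mul_norm : forall a : K, conj a * a = `|a| ^+ 2.
Hypothesis re_conj : forall a : K, re (conj a) = re a.
Hypothesis embK : cancel emb re.
Hypothesis norm_real : forall a : K, `|a| = emb (re `|a|).
Hypothesis ler_emb : {mono emb : r s / r <= s}.
Hypothesis re_le_norm : forall a : K, re a <= re `|a|.

Local Notation ka := (kabs re).
Local Notation hn := (hnorm re).
Local Notation adj := (adjoint conj).

Lemma ka_ge0 a : 0 <= ka a.
Proof. by rewrite -ler_emb rmorph0 -norm_real. Qed.

Lemma kaM a b : ka (a * b) = ka a * ka b.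
Proof. by rewrite /kabs normrM {1}(norm_real a) {1}(norm_real b) -rmorphM embK. Qed.

Lemma ler_kaD a b : ka (a + b) <= ka a + ka b.
Proof. by rewrite -ler_emb rmorphD -!norm_real ler_normD. Qed.

Lemma ka0 : ka 0 = 0.
Proof. by rewrite /kabs normr0 raddf0. Qed.

Lemma ka_eq0 a : ka a = 0 -> a = 0.
Proof. by move=> a0; apply/normr0_eq0; rewrite norm_real -/(kabs re a) a0 rmorph0. Qed.

Lemma ka_conj a : ka (conj a) = ka a.
Proof.
have : `|conj a| ^+ 2 = `|a| ^+ 2 by rewrite -conj_mul_norm conjK mulrC.
by move/eqP; rewrite eqrXn2 // => /eqP; rewrite /kabs => ->.
Qed.

Lemma ka_emb r : ka (emb r) = `|r|.
Proof.
rewrite /kabs; have [r0|r0] := leP 0 r.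
  by rewrite !ger0_norm ?embK // -(rmorph0 emb) ler_emb.
by rewrite !ltr0_norm -?rmorphN ?embK // -(rmorph0 emb) (leW_mono ler_emb).
Qed.

Lemma conj_mulE a : conj a * a = emb (ka a ^+ 2).
Proof. by rewrite conj_mul_norm norm_real rmorphXn. Qed.

Lemma ler_ka_sum I (s : seq I) (P : pred I) (F : I -> K) :
  ka (\sum_(i <- s | P i) F i) <= \sum_(i <- s | P i) ka (F i).
Proof.
elim/big_rec2: _ => [|i y x _ IH]; first by rewrite ka0.
by apply: le_trans (ler_kaD _ _) _; rewrite lerD2l.
Qed.

Definition inner n (x y : 'cV[K]_n) : K := \sum_i conj (x i 0) * y i 0.

Lemma hnorm_ge0 n (x : 'cV[K]_n) : 0 <= hn x.
Proof. exact: sqrtr_ge0. Qed.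

Lemma hnorm_sqr n (x : 'cV[K]_n) : hn x ^+ 2 = \sum_i ka (x i 0) ^+ 2.
Proof. by rewrite sqr_sqrtr // sumr_ge0 // => i _; apply: sqr_ge0. Qed.

Lemma inner_self n (x : 'cV[K]_n) : inner x x = emb (hn x ^+ 2).
Proof. by rewrite hnorm_sqr rmorph_sum; apply: eq_bigr => i _; rewrite conj_mulE. Qed.

Lemma re_inner_self n (x : 'cV[K]_n) : re (inner x x) = hn x ^+ 2.
Proof. by rewrite inner_self embK. Qed.

Lemma adjointE m n (M : 'M[K]_(m, n)) i j : adj M i j = conj (M j i).
Proof. by rewrite !mxE. Qed.

Lemma adjointK m n : cancel (@adjoint _ conj m n) (@adjoint _ conj n m).
Proof. by move=> M; apply/matrixP => i j; rewrite !adjointE conjK. Qed.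

Lemma adjointM m n p (A : 'M[K]_(m, n)) (B : 'M[K]_(n, p)) :
  adj (A *m B) = adj B *m adj A.
Proof. by rewrite /adjoint map_mxM trmx_mul. Qed.

Lemma adjointB m n (A B : 'M[K]_(m, n)) : adj (A - B) = adj A - adj B.
Proof. by rewrite /adjoint map_mxB linearB. Qed.

Lemma adjoint1 n : adj (1%:M : 'M[K]_n) = 1%:M.
Proof. by rewrite /adjoint map_mx1 trmx1. Qed.

Lemma partial_isometry_of_mulmx_adjoint m n (G : 'M[K]_(m, n)) :
  G *m adj G *m G = G -> partial_isometry conj G.
Proof.
by move=> GG; split; rewrite ?adjointM ?adjointK // -mulmxA (mulmxA G) GG.
Qed.

Lemma row_mulmx_inner n (f : 'rV[K]_n) (y : 'cV[K]_n) :
  (f *m y) 0 0 = inner (adj f) y.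
Proof. by rewrite mxE; apply: eq_bigr => i _; rewrite adjointE conjK. Qed.

Lemma inner_conj n (x y : 'cV[K]_n) : inner y x = conj (inner x y).
Proof.
by rewrite /inner rmorph_sum; apply: eq_bigr => i _; rewrite rmorphM conjK mulrC.
Qed.

Lemma innerBr n (x y z : 'cV[K]_n) : inner x (y - z) = inner x y - inner x z.
Proof. by rewrite /inner -sumrB; apply: eq_bigr => i _; rewrite !mxE mulrBr. Qed.

Lemma innerBl n (x y z : 'cV[K]_n) : inner (x - y) z = inner x z - inner y z.
Proof. by rewrite inner_conj innerBr rmorphB -!inner_conj. Qed.

Lemma innerZr n a (x y : 'cV[K]_n) : inner x (a *: y) = a * inner x y.
Proof. by rewrite /inner mulr_sumr; apply: eq_bigr => i _; rewrite mxE mulrCA. Qed.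

Lemma inner_mulmxl m n (M : 'M[K]_(m, n)) (x : 'cV[K]_n) (y : 'cV[K]_m) :
  inner (M *m x) y = inner x (adj M *m y).
Proof.
rewrite /inner; under eq_bigr do rewrite mxE rmorph_sum mulr_suml.
rewrite exchange_big /=; apply: eq_bigr => j _.
rewrite mxE mulr_sumr; apply: eq_bigr => i _.
by rewrite adjointE rmorphM; ring.
Qed.

Lemma ka_entry_le n (x : 'cV[K]_n) i : ka (x i 0) <= hn x.
Proof.
rewrite -(ger0_norm (ka_ge0 (x i 0))) -sqrtr_sqr ler_wsqrtr //.
by rewrite (bigD1 i) //= lerDl sumr_ge0 // => j _; apply: sqr_ge0.
Qed.

Lemma cauchy_schwarz n (x y : 'cV[K]_n) : ka (inner x y) <= hn x * hn y.
Proof.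
apply: le_trans (ler_ka_sum _ _ _) _; under eq_bigr do rewrite kaM ka_conj.
have sum_ge0 : 0 <= \sum_i ka (x i 0) * ka (y i 0).
  by apply: sumr_ge0 => i _; rewrite mulr_ge0 // ka_ge0.
rewrite -(ger0_norm sum_ge0) -sqrtr_sqr -sqrtrM ?sumr_ge0 // => [|i _].
  by rewrite ler_wsqrtr // cauchy_schwarz_sum.
exact: sqr_ge0.
Qed.

Lemma re_inner_le n (x y : 'cV[K]_n) : re (inner x y) <= hn x * hn y.
Proof. exact: le_trans (re_le_norm _) (cauchy_schwarz _ _). Qed.

Lemma hnormZ n a (x : 'cV[K]_n) : hn (a *: x) = ka a * hn x.
Proof.
rewrite /hnorm -(ger0_norm (ka_ge0 a)) -sqrtr_sqr -sqrtrM ?sqr_ge0 //.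
by rewrite mulr_sumr; congr Num.sqrt; apply: eq_bigr => i _; rewrite mxE kaM exprMn.
Qed.

Lemma hnorm_eq0 n (x : 'cV[K]_n) : hn x = 0 -> x = 0.
Proof.
move=> x0; apply/matrixP => i j; rewrite (ord1 j) mxE.
by apply: ka_eq0; apply/eqP; rewrite eq_le ka_ge0 -x0 ka_entry_le.
Qed.

Lemma hnorm0 n : hn (0 : 'cV[K]_n) = 0.
Proof. by rewrite /hnorm big1 ?sqrtr0 // => i _; rewrite mxE ka0 expr0n. Qed.

Lemma hnormB_sqr n (x y : 'cV[K]_n) :
  hn (x - y) ^+ 2 = hn x ^+ 2 + hn y ^+ 2 - (re (inner x y)) *+ 2.
Proof.
rewrite -!re_inner_self innerBl !innerBr (inner_conj y x) !raddfB /= re_conj.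
by rewrite mulr2n; lra.
Qed.

Lemma hnorm_normalize n (x : 'cV[K]_n) : hn x != 0 -> hn (emb (hn x)^-1 *: x) = 1.
Proof. by move=> x0; rewrite hnormZ ka_emb ger0_norm ?invr_ge0 ?hnorm_ge0 ?mulVf. Qed.

Lemma le_sup_normalize p (F : 'cV[K]_p -> R) (x : 'cV[K]_p) :
  has_sup [set F y | y in hsphere re (n:=p)] -> hn x != 0 ->
  F (emb (hn x)^-1 *: x) <= sup [set F y | y in hsphere re (n:=p)].
Proof.
move=> S_sup x0; apply: (sup_upper_bound S_sup).
exact: (ex_intro2 _ _ _ (hnorm_normalize x0) erefl).
Qed.

Lemma hnorm_adjoint_dsphere m (f : 'rV[K]_m) : dnorm re f = 1 -> hn (adj f) <= 1.
Proof.
move=> f1; have [->|f0] := eqVneq (hn (adj f)) 0; first exact: ler01.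
have S_sup : has_sup [set ka ((f *m y) 0 0) | y in hsphere re (n:=m)].
  by apply: sup_neq0_has_sup; rewrite -/(dnorm re f) f1 oner_eq0.
have := le_sup_normalize S_sup f0; rewrite -/(dnorm re f) f1 row_mulmx_inner.
rewrite innerZr inner_self -rmorphM ka_emb ger0_norm; last first.
  by rewrite mulr_ge0 ?invr_ge0 ?hnorm_ge0 ?sqr_ge0.
by rewrite expr2 mulrA mulVf // mul1r.
Qed.

Definition frobenius m n (T : 'M[K]_(m, n)) : R :=
  Num.sqrt (\sum_i hn (adj (row i T)) ^+ 2).

Lemma hnorm_mulmx_le_frobenius m n (T : 'M[K]_(m, n)) x :
  hn x = 1 -> hn (T *m x) <= frobenius T.
Proof.
move=> x1; rewrite ler_wsqrtr // ler_sum // => i _.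
have -> : (T *m x) i 0 = (row i T *m x) 0 0 by rewrite -row_mul [RHS]mxE.
rewrite ler_sqr ?nnegrE ?ka_ge0 ?hnorm_ge0 // row_mulmx_inner.
by apply: le_trans (cauchy_schwarz _ _) _; rewrite x1 mulr1.
Qed.

Lemma rank_one_mulmx p q (v : 'cV[K]_p) (i : 'I_q) (x : 'cV[K]_q) :
  v *m delta_mx 0 i *m x = x i 0 *: v.
Proof. by rewrite -mulmxA -rowE [row i x]mx11_scalar mul_mx_scalar mxE. Qed.

Section NormOne.
Variables (m n : nat) (G : 'M[K]_(m, n)).
Hypothesis opG : opnorm re G = 1.

Lemma opnorm_has_sup : has_sup [set hn (G *m x) | x in hsphere re (n:=n)].
Proof. by apply: sup_neq0_has_sup; rewrite -/(opnorm re G) opG oner_eq0. Qed.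

Lemma hnorm_mulmx_contract x : hn (G *m x) <= hn x.
Proof.
have [x0|x0] := eqVneq (hn x) 0; first by rewrite (hnorm_eq0 x0) mulmx0 !hnorm0.
have := le_sup_normalize opnorm_has_sup x0; rewrite -/(opnorm re G) opG.
rewrite -scalemxAr hnormZ ka_emb ger0_norm ?invr_ge0 ?hnorm_ge0 //.
have x_gt0 : 0 < hn x by rewrite lt_def x0 hnorm_ge0.
by rewrite mulrC ler_pdivrMr // mul1r.
Qed.

Lemma hnorm_adjoint_contract y : hn (adj G *m y) <= hn y.
Proof.
set h := hn (adj G *m y).
have h_sqr : h ^+ 2 <= hn y * h.
  rewrite /h -re_inner_self inner_mulmxl adjointK.
  apply: le_trans (re_inner_le _ _) _.
  by apply: ler_wpM2l; rewrite ?hnorm_ge0 ?hnorm_mulmx_contract.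
have := hnorm_ge0 (adj G *m y); have := hnorm_ge0 y; rewrite -/h; clearbody h; nra.
Qed.

Lemma hnorm_sub_adjoint_sqr x : hn x = 1 ->
  hn (x - adj G *m G *m x) ^+ 2 <= 1 - hn (G *m x) ^+ 2.
Proof.
move=> x1; rewrite hnormB_sqr x1 -mulmxA -inner_mulmxl re_inner_self.
have := hnorm_adjoint_contract (G *m x); have := hnorm_ge0 (adj G *m (G *m x)).
by have := hnorm_ge0 (G *m x); rewrite mulr2n; nra.
Qed.

Section VanishingNumericalRadius.
Variables (T : 'M[K]_(m, n)) (C : 'M[K]_n).
Hypothesis adjointG_T : adj G *m T = (1%:M - adj G *m G) *m C.

Lemma dual_pairing_small (s : R) x f : hn x = 1 -> dnorm re f = 1 ->
  1 - s ^+ 2 / 2 < re ((f *m (G *m x)) 0 0) ->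
  ka ((f *m (T *m x)) 0 0) <= `|s| * (frobenius T + frobenius C).
Proof.
move=> x1 f1 fGx; rewrite !row_mulmx_inner in fGx *.
set u := adj f in fGx *; set g := G *m x in fGx *.
have u1 : hn u <= 1 := hnorm_adjoint_dsphere f1.
have g1 : hn g <= 1 by rewrite -x1 hnorm_mulmx_contract.
have := hnorm_ge0 u; have := hnorm_ge0 g => g0 u0.
have ug_le : re (inner u g) <= hn g.
  by apply: le_trans (re_inner_le _ _) _; rewrite ler_piMl.
have le_s y : 0 <= y -> y ^+ 2 <= s ^+ 2 -> y <= `|s|.
  by move=> y0; rewrite -[s ^+ 2]real_normK ?num_real // ler_sqr ?nnegrE ?normr_ge0.
have u_near_g : hn (u - g) <= `|s|.
  by apply: le_s; rewrite ?hnorm_ge0 // hnormB_sqr mulr2n; nra.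
have x_near_GGx : hn (x - adj G *m G *m x) <= `|s|.
  apply: le_s; first exact: hnorm_ge0.
  by apply: le_trans (hnorm_sub_adjoint_sqr x1) _; rewrite -/g; nra.
have -> : inner u (T *m x) = inner (u - g) (T *m x) + inner g (T *m x).
  by rewrite innerBl subrK.
have -> : inner g (T *m x) = inner (x - adj G *m G *m x) (C *m x).
  have -> : x - adj G *m G *m x = adj (1%:M - adj G *m G) *m x.
    by rewrite adjointB adjoint1 adjointM adjointK mulmxBl mul1mx.
  by rewrite inner_mulmxl adjointK /g inner_mulmxl mulmxA adjointG_T -mulmxA.
apply: le_trans (ler_kaD _ _) _; rewrite mulrDr.
by apply: lerD; apply: le_trans (cauchy_schwarz _ _) _;
  apply: ler_pM; rewrite ?hnorm_ge0 ?hnorm_mulmx_le_frobenius.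
Qed.

Lemma numrange_eq0 l : numrange re G T l -> l = 0.
Proof.
move=> Vl; apply: ka_eq0; apply/eqP; rewrite eq_le ka_ge0 andbT.
apply/ler_addgt0Pr => e e_gt0; rewrite add0r.
set c := frobenius T + frobenius C + 1.
have c_gt0 : 0 < c by rewrite ltr_wpDl ?addr_ge0 ?sqrtr_ge0.
set s := e / (c *+ 2).
have s_gt0 : 0 < s by rewrite divr_gt0 ?mulrn_wgt0.
have d_gt0 : 0 < s ^+ 2 / 2 by rewrite divr_gt0 ?exprn_gt0.
have e2_gt0 : 0 < e / 2 by rewrite divr_gt0.
have [_ [x [f [x1 f1 fGx ->]]] close] := Vl _ d_gt0 _ e2_gt0.
have := dual_pairing_small x1 f1 fGx; rewrite gtr0_norm // => small.
have sc : s * (frobenius T + frobenius C) <= e / 2.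
  have -> : e / 2 = s * c by rewrite /s -mulr_natr; field; rewrite gt_eqF.
  by rewrite ler_wpM2l ?(ltW s_gt0) // /c lerDl.
have := ler_kaD ((f *m (T *m x)) 0 0) (l - (f *m (T *m x)) 0 0).
by rewrite addrC subrK; lra.
Qed.

Lemma numradius_eq0 : numradius re G T = 0.
Proof. by apply: sup_eq0 => _ [l /numrange_eq0 -> <-]; rewrite ka0. Qed.

End VanishingNumericalRadius.

Definition almost_norming (P : 'cV[K]_n -> Prop) :=
  exists2 d : R, 0 < d & forall x, hn x = 1 -> 1 - d < hn (G *m x) -> P x.

Lemma almost_normingW (P Q : 'cV[K]_n -> Prop) :
  (forall x, P x -> Q x) -> almost_norming P -> almost_norming Q.
Proof. by move=> PQ [d d0 hP]; exists d => // x x1 Gx; apply/PQ/hP. Qed.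

Lemma almost_normingI P Q :
  almost_norming P -> almost_norming Q -> almost_norming (fun x => P x /\ Q x).
Proof.
move=> [d1 d1_gt0 hP] [d2 d2_gt0 hQ].
exists (Num.min d1 d2); first by rewrite lt_min d1_gt0.
by move=> x x1 Gx; split; [apply: hP | apply: hQ] => //;
  apply: le_lt_trans Gx; rewrite lerD2l lerN2 ge_min lexx ?orbT.
Qed.

Lemma almost_norming_all (I : finType) (P : I -> 'cV[K]_n -> Prop) :
  (forall i, almost_norming (P i)) -> almost_norming (fun x => forall i, P i x).
Proof.
move=> hP; apply: (@almost_normingW (fun x => forall i, i \in enum I -> P i x)).
  by move=> x Px i; apply: Px; rewrite mem_enum.
elim: (enum I) => [|i s IHs]; first by exists 1 => // x _ _ i; rewrite in_nil.
apply: almost_normingW (almost_normingI (hP i) IHs) => x [Pix Psx] j.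
by rewrite in_cons => /predU1P [->|/Psx].
Qed.

Lemma almost_norming_witness P : almost_norming P -> exists2 x, hn x = 1 & P x.
Proof.
move=> [d d_gt0 hP]; have [S_neq0 _] := opnorm_has_sup.
have lt_opG : 1 - d < opnorm re G by rewrite opG ltrBlDr ltrDl.
have [_ [x x1 <-] Gx] := sup_gt S_neq0 lt_opG.
by exists x => //; apply: hP.
Qed.

Lemma relnorm_eq0_almost_norming T : relnorm re G T = 0 ->
  forall e, 0 < e -> almost_norming (fun x => hn (T *m x) < e).
Proof.
move=> T0 e e_gt0.
have T_lt : relnorm re G T < e by rewrite T0.
have [|_ [d d_gt0 ->] sup_lt] := inf_lt _ T_lt; first by eexists; exists 1.
exists d => // x x1 Gx; apply: le_lt_trans sup_lt.
apply: sup_upper_bound; last by exists x.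
split; first by exists (hn (T *m x)), x.
by exists (frobenius T) => _ [y [y1 _] <-]; apply: hnorm_mulmx_le_frobenius.
Qed.

Lemma almost_norming_rank_one_eq0 (v : 'cV[K]_m) :
  (forall i e, 0 < e -> almost_norming (fun x => hn (v *m delta_mx 0 i *m x) < e)) ->
  v = 0.
Proof.
move=> small; apply: hnorm_eq0; apply/eqP; rewrite eq_le hnorm_ge0 andbT leNgt.
apply/negP => v_gt0; set e := hn v / n.+1%:R.
have e_gt0 : 0 < e by rewrite divr_gt0.
have [x x1 xsmall] :=
  almost_norming_witness (almost_norming_all (fun i => small i e e_gt0)).
have : hn v ^+ 2 <= e ^+ 2 *+ n.
  rewrite -[hn v ^+ 2]mulr1 -(expr1n _ 2) -x1 (hnorm_sqr x) mulr_sumr.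
  rewrite -[n in _ *+ n]card_ord -sumr_const; apply: ler_sum => i _.
  have := xsmall i; rewrite rank_one_mulmx hnormZ mulrC -exprMn => lt_e.
  by rewrite ler_sqr ?nnegrE ?(ltW e_gt0) ?(ltW lt_e) ?mulr_ge0 ?hnorm_ge0 ?ka_ge0.
have -> : hn v = e * (n%:R + 1) by rewrite /e natr1 mulfVK ?pnatr_eq0.
rewrite -mulr_natr; have := ler0n R n; nra.
Qed.

Lemma relative_spear_mulmx_adjoint : relative_spear re G -> G *m adj G *m G = G.
Proof.
move=> spear; set P := 1%:M - G *m adj G.
have adjG_P : adj G *m P = (1%:M - adj G *m G) *m adj G.
  by rewrite mulmxBr mulmxBl mulmx1 mul1mx !mulmxA.
suff PG0 j : col j (P *m G) = 0.
  apply/esym/eqP; rewrite -subr_eq0 -[X in X - _]mul1mx -mulmxBl; apply/eqP.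
  by apply/matrixP => i j; move/matrixP/(_ i 0): (PG0 j); rewrite !mxE.
apply: almost_norming_rank_one_eq0 => i e e_gt0.
apply: relnorm_eq0_almost_norming => //; rewrite -spear.
apply: (@numradius_eq0 _ (adj G *m G *m delta_mx j 0 *m delta_mx 0 i)).
by rewrite colE !mulmxA adjG_P.
Qed.

End NormOne.

Theorem partial_isometry_of_relative_spear m n (G : 'M[K]_(m, n)) :
  opnorm re G = 1 -> relative_spear re G -> partial_isometry conj G.
Proof.
move=> opG spear.
exact/partial_isometry_of_mulmx_adjoint/relative_spear_mulmx_adjoint.
Qed.

End HilbertSpace.

Theorem theorem3p12 (R : realType) :
  (forall (n m : nat) (G : 'M[R]_(m, n)),
      opnorm (fun z : R => z) G = 1 ->
      relative_spear (fun z : R => z) G ->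
      partial_isometry (fun z : R => z) G) /\
  (forall (n m : nat) (G : 'M[R[i]]_(m, n)),
      opnorm (@Re R) G = 1 ->
      relative_spear (@Re R) G ->
      partial_isometry (@conjc R) G).
Proof.
split=> n m G opG spear.
  apply: (@partial_isometry_of_relative_spear R R idfun idfun idfun) opG spear => //.
  - by move=> a; rewrite real_normK ?num_real // expr2.
  - exact: ler_norm.
apply: (@partial_isometry_of_relative_spear R _ (@complex.Re R) conjc (real_complex R))
  opG spear.
- exact: conjcK.
- by move=> a; rewrite sqr_normc mulrC.
- by case.
- by [].
- by move=> a; rewrite normc_def.
- exact: lecR.
- case=> x y; rewrite normc_def /=; apply: le_trans (ler_norm x) _.
  by rewrite -sqrtr_sqr ler_wsqrtr // lerDl sqr_ge0.
Qed.
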